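(* In $\mathcal{H}eis_k$, with $\tau,c',d',x'$ as in the context, the following relations hold: $\tau\circ(x'\otimes 1_\uparrow)-(1_\uparrow\otimes x')\circ\tau=c'\circ d'$, $\quad\tau\circ(1_\downarrow\otimes x)-(x\otimes 1_\downarrow)\circ\tau=c'\circ d'$, $d'\circ(1_\downarrow\otimes x)=d'\circ(x'\otimes 1_\uparrow)$, $\quad(x\otimes 1_\downarrow)\circ c'=(1_\uparrow\otimes x')\circ c'$.
   Context: Fix a commutative ring $\Bbbk$ and an integer $k$. In a strict monoidal category write $\mathbf 1$ for the unit object, $1_X$ for the identity, $a\circ b$ for composition, $a\otimes b$ for tensor product, $x^n$ for the $n$-fold composite. The Heisenberg category $\mathcal{H}eis_k$ is the strict $\Bbbk$-linear monoidal category generated by objects $\uparrow,\downarrow$ and morphisms $x:\uparrow\to\uparrow$, $s:\uparrow\otimes\uparrow\to\uparrow\otimes\uparrow$, $c:\mathbf 1\to\downarrow\otimes\uparrow$, $d:\uparrow\otimes\downarrow\to\mathbf 1$, subject to the following relations, where $t:=(1_\downarrow\otimes 1_\uparrow\otimes d)\circ(1_\downarrow\otimes s\otimes 1_\downarrow)\circ(c\otimes 1_\uparrow\otimes 1_\downarrow):\uparrow\otimes\downarrow\to\downarrow\otimes\uparrow$: (H) $s\circ s=1_{\uparrow\otimes\uparrow}$; $(s\otimes 1_\uparrow)\circ(1_\uparrow\otimes s)\circ(s\otimes 1_\uparrow)=(1_\uparrow\otimes s)\circ(s\otimes 1_\uparrow)\circ(1_\uparrow\otimes s)$; $(x\otimes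 1_\uparrow)\circ s-s\circ(1_\uparrow\otimes x)=1_{\uparrow\otimes\uparrow}$. (A) $(d\otimes 1_\uparrow)\circ(1_\uparrow\otimes c)=1_\uparrow$ and $(1_\downarrow\otimes d)\circ(c\otimes 1_\downarrow)=1_\downarrow$. (I) If $k\ge0$, the morphism $\uparrow\otimes\downarrow\to(\downarrow\otimes\uparrow)\oplus\mathbf 1^{\oplus k}$ with components $t$ and $d\circ(x^r\otimes 1_\downarrow)$, $r=0,\dots,k-1$, is an isomorphism in the additive envelope; if $k<0$, the morphism $(\uparrow\otimes\downarrow)\oplus\mathbf 1^{\oplus(-k)}\to\downarrow\otimes\uparrow$ with components $t$ and $(1_\downarrow\otimes x^r)\circ c$, $r=0,\dots,-k-1$, is an isomorphism in the additive envelope (formally, the entries of a two-sided inverse matrix are adjoined as generators). If $k\ge0$ the inverse in (I) has components $\tau:\downarrow\otimes\uparrow\to\uparrow\otimes\downarrow$ and $e_r:\mathbf 1\to\uparrow\otimes\downarrow$ ($0\le r<k$); if $k<0$ it has components $\tau:\downarrow\otimes\uparrow\to\uparrow\otimes\downarrow$ and $f_r:\downarrow\otimes\uparrow\to\mathbf 1$ ($0\le r<-k$). Set $c':=-e_{k-1}$ if $k>0$, $c':=\tau\circ(1_\downarrow\otimes x^{-k})\circ c$ if $k\le0$; $d':=d\circ(x^k\otimes1_\downarrow)\circ\tau$ if $k\ge0$, $d':=f_{-k-1}$ if $k<0$. Let $x':=(1_\downarrow\otimes d)\circ(1_\downarrow\otimes x\otimes 1_\downarrow)\circ(c\otimes 1_\downarrow):\downarrow\to\downarrow$.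 *)

From HB Require Import structures.
From mathcomp Require Import all_boot all_algebra.
Set Implicit Arguments. Unset Strict Implicit. Unset Printing Implicit Defensive.
Import GRing.Theory.
Local Open Scope ring_scope.

Definition obj := seq bool.
Definition up : obj := [:: true].
Definition dn : obj := [:: false].
Definition unit_obj : obj := [::].

Definition castH (H : obj -> obj -> Type) (A A' B B' : obj)
  (eA : A = A') (eB : B = B') (f : H A B) : H A' B' :=
  match eA in _ = X, eB in _ = Y return H X Y with erefl, erefl => f end.

(* A strict R-linear monoidal category whose monoid of objects is the free
   monoid on {up, down} (as is the case for Heis_k). *)
Record smcat (R : comPzRingType) := SMCat {
  mor : obj -> obj -> lmodType R;
  mcomp : forall A B C, mor B C -> mor A B -> mor A C;
  mid : forall A, mor A A;
  mtens : forall A B C D, mor A B -> mor C D -> mor (A ++ C) (B ++ D);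
  compA : forall A B C D (f : mor C D) (g : mor B C) (h : mor A B),
    mcomp f (mcomp g h) = mcomp (mcomp f g) h;
  comp1m : forall A B (f : mor A B), mcomp (mid B) f = f;
  compm1 : forall A B (f : mor A B), mcomp f (mid A) = f;
  compDl : forall A B C (f f' : mor B C) (g : mor A B),
    mcomp (f + f') g = mcomp f g + mcomp f' g;
  compDr : forall A B C (f : mor B C) (g g' : mor A B),
    mcomp f (g + g') = mcomp f g + mcomp f g';
  compZl : forall A B C (a : R) (f : mor B C) (g : mor A B),
    mcomp (a *: f) g = a *: mcomp f g;
  compZr : forall A B C (a : R) (f : mor B C) (g : mor A B),
    mcomp f (a *: g) = a *: mcomp f g;
  tensDl : forall A B C D (f f' : mor A B) (g : mor C D),
    mtens (f + f') g = mtens f g + mtens f' g;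
  tensDr : forall A B C D (f : mor A B) (g g' : mor C D),
    mtens f (g + g') = mtens f g + mtens f g';
  tensZl : forall A B C D (a : R) (f : mor A B) (g : mor C D),
    mtens (a *: f) g = a *: mtens f g;
  tensZr : forall A B C D (a : R) (f : mor A B) (g : mor C D),
    mtens f (a *: g) = a *: mtens f g;
  tens_comp : forall A B C A' B' C' (f : mor B C) (f' : mor A B)
      (g : mor B' C') (g' : mor A' B'),
    mcomp (mtens f g) (mtens f' g') = mtens (mcomp f f') (mcomp g g');
  tens_id : forall A B, mtens (mid A) (mid B) = mid (A ++ B);
  tensA : forall A B C D E F (f : mor A B) (g : mor C D) (h : mor E F),
    mtens (mtens f g) h =
    castH (H := fun X Y => mor X Y : Type) (catA A C E) (catA B D F)
      (mtens f (mtens g h));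
  tens1l : forall A B (f : mor A B), mtens (mid unit_obj) f = f;
  tens1r : forall A B (f : mor A B),
    mtens f (mid unit_obj) =
    castH (H := fun X Y => mor X Y : Type) (esym (cats0 A)) (esym (cats0 B)) f
}.

Arguments mcomp {R} s {A B C} _ _.
Arguments mid {R} s A.
Arguments mtens {R} s {A B C D} _ _.

Section Heis.
Variables (R : comPzRingType) (C : smcat R).

Definition powm (A : obj) (f : mor C A A) (n : nat) : mor C A A :=
  iter n (mcomp C f) (mid C A).

Variables (x : mor C up up) (s : mor C (up ++ up) (up ++ up))
  (c : mor C unit_obj (dn ++ up)) (d : mor C (up ++ dn) unit_obj).

Definition heis_t : mor C (up ++ dn) (dn ++ up) :=
  mcomp C (mtens C (mid C dn) (mtens C (mid C up) d))
    (mcomp C (mtens C (mid C dn) (mtens C s (mid C dn)))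
       (mtens C c (mtens C (mid C up) (mid C dn)))).

Definition heis_x' : mor C dn dn :=
  mcomp C (mtens C (mid C dn) d)
    (mcomp C (mtens C (mid C dn) (mtens C x (mid C dn))) (mtens C c (mid C dn))).

Variables (tau : mor C (dn ++ up) (up ++ dn))
  (e : nat -> mor C unit_obj (up ++ dn))
  (f : nat -> mor C (dn ++ up) unit_obj).

(* Relations (H), (A), (I) of Heis_k, where for k >= 0 the entries of the
   inverse in (I) are tau and e_r (r < k), and for k < 0 they are tau and
   f_r (r < -k).  Note Negz m = -(m+1). *)
Definition heis_rels (k : int) : Prop :=
  [/\ mcomp C s s = mid C (up ++ up),
      mcomp C (mtens C s (mid C up)) (mcomp C (mtens C (mid C up) s) (mtens C s (mid C up)))
      = mcomp C (mtens C (mid C up) s) (mcomp C (mtens C s (mid C up)) (mtens C (mid C up) s)),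
      mcomp C (mtens C x (mid C up)) s - mcomp C s (mtens C (mid C up) x) = mid C (up ++ up),
      mcomp C (mtens C d (mid C up)) (mtens C (mid C up) c) = mid C up &
      mcomp C (mtens C (mid C dn) d) (mtens C c (mid C dn)) = mid C dn] /\
      match k with
      | Posz n =>
        [/\ mcomp C tau heis_t
            + \sum_(r < n) mcomp C (e r) (mcomp C d (mtens C (powm x r) (mid C dn)))
            = mid C (up ++ dn),
          mcomp C heis_t tau = mid C (dn ++ up),
          forall r, (r < n)%N -> mcomp C heis_t (e r) = 0,
          forall r, (r < n)%N ->
            mcomp C (mcomp C d (mtens C (powm x r) (mid C dn))) tau = 0 &
          forall r r', (r < n)%N -> (r' < n)%N ->
            mcomp C (mcomp C d (mtens C (powm x r) (mid C dn))) (e r')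
            = if r == r' then mid C unit_obj else 0]
      | Negz m =>
        [/\ mcomp C heis_t tau
            + \sum_(r < m.+1) mcomp C (mcomp C (mtens C (mid C dn) (powm x r)) c) (f r)
            = mid C (dn ++ up),
          mcomp C tau heis_t = mid C (up ++ dn),
          forall r, (r < m.+1)%N ->
            mcomp C tau (mcomp C (mtens C (mid C dn) (powm x r)) c) = 0,
          forall r, (r < m.+1)%N -> mcomp C (f r) heis_t = 0 &
          forall r r', (r < m.+1)%N -> (r' < m.+1)%N ->
            mcomp C (f r) (mcomp C (mtens C (mid C dn) (powm x r')) c)
            = if r == r' then mid C unit_obj else 0]
      end.

Definition heis_c' (k : int) : mor C unit_obj (up ++ dn) :=
  if (0 < k)%R then - e (absz k).-1
  else mcomp C tau (mcomp C (mtens C (mid C dn) (powm x (absz k))) c).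

Definition heis_d' (k : int) : mor C (dn ++ up) unit_obj :=
  if (0 <= k)%R then mcomp C d (mcomp C (mtens C (powm x (absz k)) (mid C dn)) tau)
  else f (absz k).-1.

End Heis.

From Pilot Require Import Defs.
From HB Require Import structures.
From mathcomp Require Import all_boot all_algebra.
Set Implicit Arguments.
Unset Strict Implicit.
Unset Printing Implicit Defensive.

Import GRing.Theory.
Local Open Scope ring_scope.

(* Call a pair (A, B) of endomorphisms of ↑↓ and ↓↑ a shift pair when
   t ∘ A - B ∘ t = - c ∘ d and A, B raise r by one in d ∘ (x^r ⊗ 1) and in
   (1 ⊗ x^r) ∘ c.  Both (x ⊗ 1, 1 ⊗ x) and (1 ⊗ x', x' ⊗ 1) are shift pairs:
   t is s rotated through c and d, so its commutator with x is the rotated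
   relation x s - s x = 1, and x' moves through c and d as x does, by the
   zigzag identity.  Inverting t as in (I) expresses τ ∘ B - A ∘ τ, d' ∘ B and
   A ∘ c' by data independent of the shift pair, and comparing the two pairs
   gives the four relations. *)

Local Notation "f ∘ g" := (mcomp _ f g) (at level 40, left associativity).
Local Notation "f ⊗ g" := (mtens _ f g) (at level 35).

Section MonoidalCalculus.
Variables (R : comPzRingType) (C : smcat R).

Lemma castH_id (A B : obj) (eA : A = A) (eB : B = B) (g : mor C A B) :
  castH (H := fun X Y => mor C X Y : Type) eA eB g = g.
Proof. by rewrite (eq_irrelevance eA erefl) (eq_irrelevance eB erefl). Qed.

Lemma comp0l A B D (g : mor C A B) : (0 : mor C B D) ∘ g = 0.
Proof. by rewrite -(scale0r (0 : mor C B D)) compZl scale0r. Qed.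

Lemma comp0r A B D (g : mor C B D) : g ∘ (0 : mor C A B) = 0.
Proof. by rewrite -(scale0r (0 : mor C A B)) compZr scale0r. Qed.

Lemma compNl A B D (f : mor C B D) (g : mor C A B) : (- f) ∘ g = - (f ∘ g).
Proof. by rewrite -scaleN1r compZl scaleN1r. Qed.

Lemma compNr A B D (f : mor C B D) (g : mor C A B) : f ∘ (- g) = - (f ∘ g).
Proof. by rewrite -scaleN1r compZr scaleN1r. Qed.

Lemma compBl A B D (f f' : mor C B D) (g : mor C A B) :
  (f - f') ∘ g = f ∘ g - f' ∘ g.
Proof. by rewrite compDl compNl. Qed.

Lemma compBr A B D (f : mor C B D) (g g' : mor C A B) :
  f ∘ (g - g') = f ∘ g - f ∘ g'.
Proof. by rewrite compDr compNr. Qed.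

Lemma tensNl A B A' B' (f : mor C A B) (g : mor C A' B') : (- f) ⊗ g = - (f ⊗ g).
Proof. by rewrite -scaleN1r tensZl scaleN1r. Qed.

Lemma tensNr A B A' B' (f : mor C A B) (g : mor C A' B') : f ⊗ (- g) = - (f ⊗ g).
Proof. by rewrite -scaleN1r tensZr scaleN1r. Qed.

Lemma tensBl A B A' B' (f f' : mor C A B) (g : mor C A' B') :
  (f - f') ⊗ g = f ⊗ g - f' ⊗ g.
Proof. by rewrite tensDl tensNl. Qed.

Lemma tensBr A B A' B' (f : mor C A B) (g g' : mor C A' B') :
  f ⊗ (g - g') = f ⊗ g - f ⊗ g'.
Proof. by rewrite tensDr tensNr. Qed.

Lemma comp_suml A B D n (F : 'I_n -> mor C B D) (g : mor C A B) :
  (\sum_(i < n) F i) ∘ g = \sum_(i < n) (F i ∘ g).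
Proof.
elim: n F => [|n IHn] F; first by rewrite !big_ord0 comp0l.
by rewrite !big_ord_recr /= compDl IHn.
Qed.

Lemma comp_sumr A B D n (F : 'I_n -> mor C A B) (g : mor C B D) :
  g ∘ (\sum_(i < n) F i) = \sum_(i < n) (g ∘ F i).
Proof.
elim: n F => [|n IHn] F; first by rewrite !big_ord0 comp0r.
by rewrite !big_ord_recr /= compDr IHn.
Qed.

Lemma tens_interchange A B A' B' (f : mor C A B) (g : mor C A' B') :
  f ⊗ g = (mid C B ⊗ g) ∘ (f ⊗ mid C A').
Proof. by rewrite tens_comp comp1m compm1. Qed.

Lemma counit_interchange B (g : mor C (up ++ dn) unit_obj) (h : mor C B unit_obj) :
  g ∘ (mid C (up ++ dn) ⊗ h) = h ∘ (g ⊗ mid C B).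
Proof.
have g1 : g ⊗ mid C unit_obj = g by rewrite tens1r castH_id.
have -> : g ∘ (mid C (up ++ dn) ⊗ h)
    = (g ⊗ mid C unit_obj) ∘ (mid C (up ++ dn) ⊗ h) by rewrite g1.
have -> : h ∘ (g ⊗ mid C B) = (mid C unit_obj ⊗ h) ∘ (g ⊗ mid C B).
  by rewrite tens1l.
by rewrite !tens_comp !compm1 !comp1m.
Qed.

Lemma unit_interchange B (g : mor C unit_obj (dn ++ up)) (h : mor C unit_obj B) :
  (g ⊗ mid C B) ∘ h = (mid C (dn ++ up) ⊗ h) ∘ g.
Proof.
have g1 : g ⊗ mid C unit_obj = g by rewrite tens1r castH_id.
have -> : (mid C (dn ++ up) ⊗ h) ∘ g
    = (mid C (dn ++ up) ⊗ h) ∘ (g ⊗ mid C unit_obj) by rewrite g1.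
have -> : (g ⊗ mid C B) ∘ h = (g ⊗ mid C B) ∘ (mid C unit_obj ⊗ h).
  by rewrite tens1l.
by rewrite !tens_comp !compm1 !comp1m.
Qed.

Lemma powm0 A (g : mor C A A) : powm g 0 = mid C A.
Proof. by []. Qed.

Lemma powmSr A (g : mor C A A) n : powm g n.+1 = powm g n ∘ g.
Proof.
elim: n => [|n IHn]; first by rewrite /powm /= comp1m compm1.
by rewrite [LHS]/powm iterS -/(powm g n.+1) [in LHS]IHn Defs.compA.
Qed.

End MonoidalCalculus.

Section Mates.
Variables (R : comPzRingType) (C : smcat R).
Local Notation iu := (mid C up).
Local Notation id := (mid C dn).
Variables (x : mor C up up) (c : mor C unit_obj (dn ++ up))
  (d : mor C (up ++ dn) unit_obj).
Hypothesis zigzag : (d ⊗ iu) ∘ (iu ⊗ c) = iu.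
Local Notation x' := (heis_x' x c d).

Lemma d_slide_x' : d ∘ (iu ⊗ x') = d ∘ (x ⊗ id).
Proof.
have -> : iu ⊗ x' =
    (iu ⊗ (id ⊗ d)) ∘ ((iu ⊗ (id ⊗ (x ⊗ id))) ∘ (iu ⊗ (c ⊗ id))).
  by rewrite !tens_comp !comp1m.
have E1 : (iu ⊗ id) ⊗ d = iu ⊗ (id ⊗ d) by rewrite tensA castH_id.
(* The two caps d commute; then the zigzag straightens the strand carrying x. *)
rewrite -E1 tens_id (Defs.compA d) counit_interchange -(Defs.compA d).
have E2 : (d ⊗ iu) ⊗ id = d ⊗ (iu ⊗ id) by rewrite tensA castH_id.
have E3 : ((iu ⊗ id) ⊗ x) ⊗ id = iu ⊗ (id ⊗ (x ⊗ id)).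
  by rewrite tensA castH_id tensA castH_id.
have E4 : (iu ⊗ c) ⊗ id = iu ⊗ (c ⊗ id) by rewrite tensA castH_id.
rewrite -tens_id -E2 -E3 -E4.
change (d ∘ (((d ⊗ iu) ⊗ id)
    ∘ ((((iu ⊗ id) ⊗ x) ⊗ id) ∘ ((iu ⊗ c) ⊗ id))) = d ∘ (x ⊗ id)).
have slide_x : (d ⊗ iu) ∘ ((iu ⊗ id) ⊗ x) = x ∘ (d ⊗ iu).
  by rewrite tens_comp tens_id compm1 comp1m tens_interchange tens1l.
by rewrite !tens_comp !comp1m Defs.compA slide_x -Defs.compA zigzag compm1.
Qed.

Lemma c_slide_x' : (x' ⊗ iu) ∘ c = (id ⊗ x) ∘ c.
Proof.
have -> : x' ⊗ iu =
    ((id ⊗ d) ⊗ iu) ∘ (((id ⊗ (x ⊗ id)) ⊗ iu) ∘ ((c ⊗ id) ⊗ iu)).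
  by rewrite !tens_comp !comp1m.
have F1 : (c ⊗ id) ⊗ iu = c ⊗ (id ⊗ iu) by rewrite tensA castH_id.
have F2 : (id ⊗ d) ⊗ iu = id ⊗ (d ⊗ iu) by rewrite tensA castH_id.
have F3 : (id ⊗ (x ⊗ id)) ⊗ iu = id ⊗ ((x ⊗ id) ⊗ iu).
  by rewrite tensA castH_id.
have F4 : (id ⊗ iu) ⊗ c = id ⊗ (iu ⊗ c) by rewrite tensA castH_id.
have F5 : (x ⊗ id) ⊗ iu = x ⊗ (id ⊗ iu) by rewrite tensA castH_id.
(* Dually, the two cups c commute. *)
rewrite F1 (tens_id C dn up) -!Defs.compA unit_interchange -(tens_id C dn up).
rewrite F2 F3 F4.
change ((id ⊗ (d ⊗ iu))
    ∘ ((id ⊗ ((x ⊗ id) ⊗ iu)) ∘ ((id ⊗ (iu ⊗ c)) ∘ c)) = (id ⊗ x) ∘ c).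
have slide_x : (x ⊗ mid C (dn ++ up)) ∘ (iu ⊗ c) = (iu ⊗ c) ∘ x.
  by rewrite tens_comp comp1m compm1 tens_interchange tens1r castH_id.
rewrite (Defs.compA (id ⊗ ((x ⊗ id) ⊗ iu))) tens_comp comp1m F5 (tens_id C dn up).
by rewrite slide_x Defs.compA tens_comp comp1m Defs.compA zigzag comp1m.
Qed.

End Mates.

Section Rotation.
Variables (R : comPzRingType) (C : smcat R).
Local Notation iu := (mid C up).
Local Notation id := (mid C dn).
Local Notation i0 := (mid C unit_obj).
Local Notation iuu := (mid C (up ++ up)).
Local Notation iud := (mid C (up ++ dn)).
Local Notation iuud := (mid C (up ++ (up ++ dn))).
Variables (x : mor C up up) (c : mor C unit_obj (dn ++ up))
  (d : mor C (up ++ dn) unit_obj).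
Local Notation x' := (heis_x' x c d).

Definition rot (g : mor C (up ++ up) (up ++ up)) : mor C (up ++ dn) (dn ++ up) :=
  (id ⊗ (iu ⊗ d)) ∘ ((id ⊗ (g ⊗ id)) ∘ (c ⊗ (iu ⊗ id))).

Lemma heis_tE s : heis_t s c d = rot s.
Proof. by []. Qed.

Lemma rot_id : rot iuu = c ∘ d.
Proof.
have E : id ⊗ (iu ⊗ d) = mid C (dn ++ up) ⊗ d by rewrite -tens_id tensA castH_id.
rewrite /rot !tens_id comp1m E.
change ((mid C (dn ++ up) ⊗ d) ∘ (c ⊗ iud) = c ∘ d).
have -> : c ∘ d = (c ⊗ i0) ∘ (i0 ⊗ d) by rewrite tens1l tens1r castH_id.
by rewrite !tens_comp !compm1 !comp1m.
Qed.

Lemma rotB g h : rot (g - h) = rot g - rot h.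
Proof. by rewrite /rot tensBl tensBr compBl compBr. Qed.

Lemma rotN g : rot (- g) = - rot g.
Proof. by rewrite /rot tensNl tensNr compNl compNr. Qed.

Lemma rot_comp_x g : rot g ∘ (x ⊗ id) = rot (g ∘ (iu ⊗ x)).
Proof.
have slide_c : (c ⊗ (iu ⊗ id)) ∘ (x ⊗ id)
    = (id ⊗ ((iu ⊗ x) ⊗ id)) ∘ (c ⊗ (iu ⊗ id)).
  have E : (id ⊗ iu) ⊗ (x ⊗ id) = id ⊗ ((iu ⊗ x) ⊗ id).
    by rewrite tensA castH_id tensA castH_id.
  have -> : (c ⊗ (iu ⊗ id)) ∘ (x ⊗ id)
      = (c ⊗ (iu ⊗ id)) ∘ (i0 ⊗ (x ⊗ id)) by rewrite tens1l.
  rewrite -E.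
  change ((c ⊗ (iu ⊗ id)) ∘ (i0 ⊗ (x ⊗ id))
    = ((id ⊗ iu) ⊗ (x ⊗ id)) ∘ (c ⊗ (iu ⊗ id))).
  by rewrite !tens_comp !comp1m !compm1 tens_id comp1m.
rewrite /rot -!Defs.compA slide_c (Defs.compA (id ⊗ (g ⊗ id))).
by rewrite !tens_comp !comp1m.
Qed.

Lemma x_comp_rot g : (id ⊗ x) ∘ rot g = rot ((x ⊗ iu) ∘ g).
Proof.
have slide_d : x ∘ (iu ⊗ d) = (iu ⊗ d) ∘ ((x ⊗ iu) ⊗ id).
  have E : (x ⊗ iu) ⊗ id = x ⊗ iud by rewrite tensA castH_id tens_id.
  have x1 : x ⊗ i0 = x by rewrite tens1r castH_id.
  rewrite E -[in LHS]x1.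
  change ((x ⊗ i0) ∘ (iu ⊗ d) = (iu ⊗ d) ∘ (x ⊗ iud)).
  by rewrite !tens_comp !comp1m !compm1.
have slide_id_d : (id ⊗ x) ∘ (id ⊗ (iu ⊗ d))
    = (id ⊗ (iu ⊗ d)) ∘ (id ⊗ ((x ⊗ iu) ⊗ id)).
  by rewrite !tens_comp !comp1m slide_d.
rewrite /rot Defs.compA slide_id_d -!Defs.compA.
by rewrite (Defs.compA (id ⊗ ((x ⊗ iu) ⊗ id))) !tens_comp !comp1m.
Qed.

Hypothesis zigzag : (d ⊗ iu) ∘ (iu ⊗ c) = iu.

Lemma rot_comp_x' g : rot g ∘ (iu ⊗ x') = rot ((iu ⊗ x) ∘ g).
Proof.
have slide_c : (c ⊗ (iu ⊗ id)) ∘ (iu ⊗ x')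
    = (id ⊗ (iuu ⊗ x')) ∘ (c ⊗ (iu ⊗ id)).
  have E : (id ⊗ iu) ⊗ (iu ⊗ x') = id ⊗ (iuu ⊗ x').
    by rewrite -tens_id tensA castH_id tensA castH_id.
  have -> : (c ⊗ (iu ⊗ id)) ∘ (iu ⊗ x')
      = (c ⊗ (iu ⊗ id)) ∘ (i0 ⊗ (iu ⊗ x')) by rewrite tens1l.
  rewrite -E.
  change ((c ⊗ (iu ⊗ id)) ∘ (i0 ⊗ (iu ⊗ x'))
    = ((id ⊗ iu) ⊗ (iu ⊗ x')) ∘ (c ⊗ (iu ⊗ id))).
  by rewrite !tens_comp !comp1m !compm1 tens_id comp1m.
have slide_g : (id ⊗ (g ⊗ id)) ∘ (id ⊗ (iuu ⊗ x'))
    = (id ⊗ (iuu ⊗ x')) ∘ (id ⊗ (g ⊗ id)).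
  by rewrite !tens_comp !comp1m !compm1.
have slide_d : (id ⊗ (iu ⊗ d)) ∘ (id ⊗ (iuu ⊗ x'))
    = (id ⊗ (iu ⊗ d)) ∘ (id ⊗ ((iu ⊗ x) ⊗ id)).
  have E1 : iuu ⊗ x' = iu ⊗ (iu ⊗ x') by rewrite -tens_id tensA castH_id.
  have E2 : (iu ⊗ x) ⊗ id = iu ⊗ (x ⊗ id) by rewrite tensA castH_id.
  rewrite !tens_comp !comp1m E1 E2.
  change (id ⊗ ((iu ⊗ d) ∘ (iu ⊗ (iu ⊗ x')))
    = id ⊗ ((iu ⊗ d) ∘ (iu ⊗ (x ⊗ id)))).
  by rewrite !tens_comp !comp1m (d_slide_x' x zigzag).
have E : id ⊗ (((iu ⊗ x) ∘ g) ⊗ id)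
    = (id ⊗ ((iu ⊗ x) ⊗ id)) ∘ (id ⊗ (g ⊗ id)).
  by rewrite !tens_comp !comp1m.
rewrite /rot E -!Defs.compA slide_c (Defs.compA (id ⊗ (g ⊗ id))) slide_g.
by rewrite -Defs.compA (Defs.compA (id ⊗ (iu ⊗ d))) slide_d -!Defs.compA.
Qed.

Lemma x'_comp_rot g : (x' ⊗ iu) ∘ rot g = rot (g ∘ (x ⊗ iu)).
Proof.
have slide_d : (x' ⊗ iu) ∘ (id ⊗ (iu ⊗ d))
    = (id ⊗ (iu ⊗ d)) ∘ (x' ⊗ iuud).
  by rewrite !tens_comp !comp1m !compm1.
have slide_g : (x' ⊗ iuud) ∘ (id ⊗ (g ⊗ id))
    = (id ⊗ (g ⊗ id)) ∘ (x' ⊗ iuud).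
  by rewrite !tens_comp !comp1m !compm1.
have slide_c : (x' ⊗ iuud) ∘ (c ⊗ (iu ⊗ id))
    = (id ⊗ ((x ⊗ iu) ⊗ id)) ∘ (c ⊗ (iu ⊗ id)).
  have E1 : (x' ⊗ iu) ⊗ iud = x' ⊗ iuud by rewrite tensA castH_id tens_id.
  have E2 : (id ⊗ x) ⊗ iud = id ⊗ ((x ⊗ iu) ⊗ id).
    by rewrite tensA castH_id tensA castH_id tens_id.
  rewrite -E1 -E2.
  change (((x' ⊗ iu) ⊗ iud) ∘ (c ⊗ (iu ⊗ id))
    = ((id ⊗ x) ⊗ iud) ∘ (c ⊗ (iu ⊗ id))).
  by rewrite !tens_comp (c_slide_x' x zigzag).
have E : id ⊗ ((g ∘ (x ⊗ iu)) ⊗ id)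
    = (id ⊗ (g ⊗ id)) ∘ (id ⊗ ((x ⊗ iu) ⊗ id)).
  by rewrite !tens_comp !comp1m.
rewrite /rot E (Defs.compA (x' ⊗ iu)) slide_d -(Defs.compA _ (x' ⊗ iuud)).
by rewrite (Defs.compA (x' ⊗ iuud)) slide_g -!Defs.compA slide_c.
Qed.

Variable s : mor C (up ++ up) (up ++ up).
Hypotheses (s_invol : s ∘ s = iuu)
  (xs_sx : (x ⊗ iu) ∘ s - s ∘ (iu ⊗ x) = iuu).
Local Notation t := (heis_t s c d).

Lemma xs_sx_swap : (iu ⊗ x) ∘ s - s ∘ (x ⊗ iu) = - iuu.
Proof.
have conj_s : s ∘ ((x ⊗ iu) ∘ s - s ∘ (iu ⊗ x)) ∘ s
    = s ∘ (x ⊗ iu) - (iu ⊗ x) ∘ s.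
  by rewrite compBr compBl -!Defs.compA s_invol compm1 Defs.compA s_invol comp1m.
by rewrite -opprB -conj_s xs_sx compm1 s_invol.
Qed.

Lemma t_comm_x : t ∘ (x ⊗ id) - (id ⊗ x) ∘ t = - (c ∘ d).
Proof. by rewrite heis_tE rot_comp_x x_comp_rot -rotB -opprB xs_sx rotN rot_id. Qed.

Lemma t_comm_x' : t ∘ (iu ⊗ x') - (x' ⊗ iu) ∘ t = - (c ∘ d).
Proof. by rewrite heis_tE rot_comp_x' x'_comp_rot -rotB xs_sx_swap rotN rot_id. Qed.

End Rotation.

Section ShiftPairs.
Variables (R : comPzRingType) (C : smcat R).
Local Notation iu := (mid C up).
Local Notation id := (mid C dn).
Variables (x : mor C up up) (s : mor C (up ++ up) (up ++ up))
  (c : mor C unit_obj (dn ++ up)) (d : mor C (up ++ dn) unit_obj).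
Local Notation t := (heis_t s c d).
Local Notation x' := (heis_x' x c d).

Definition dpow r : mor C (up ++ dn) unit_obj := d ∘ (powm x r ⊗ id).
Definition cpow r : mor C unit_obj (dn ++ up) := (id ⊗ powm x r) ∘ c.

Definition shift_pair (A : mor C (up ++ dn) (up ++ dn))
    (B : mor C (dn ++ up) (dn ++ up)) :=
  [/\ t ∘ A - B ∘ t = - (c ∘ d), forall r, dpow r ∘ A = dpow r.+1
    & forall r, B ∘ cpow r = cpow r.+1].

Section StandardPairs.
Hypotheses (s_invol : s ∘ s = mid C (up ++ up))
  (xs_sx : (x ⊗ iu) ∘ s - s ∘ (iu ⊗ x) = mid C (up ++ up)).

Lemma shift_pair_x : shift_pair (x ⊗ id) (id ⊗ x).
Proof.
split=> [|r|r]; first exact: t_comm_x.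
- by rewrite /dpow -Defs.compA tens_comp comp1m -powmSr.
- by rewrite Defs.compA tens_comp comp1m.
Qed.

Hypothesis zigzag : (d ⊗ iu) ∘ (iu ⊗ c) = iu.

Lemma shift_pair_x' : shift_pair (iu ⊗ x') (x' ⊗ iu).
Proof.
split=> [|r|r]; first exact: t_comm_x'.
- have -> : dpow r ∘ (iu ⊗ x') = d ∘ ((iu ⊗ x') ∘ (powm x r ⊗ id)).
    by rewrite -Defs.compA !tens_comp !comp1m !compm1.
  by rewrite Defs.compA (d_slide_x' x zigzag) -Defs.compA tens_comp comp1m.
- have -> : (x' ⊗ iu) ∘ cpow r = ((id ⊗ powm x r) ∘ (x' ⊗ iu)) ∘ c.
    by rewrite Defs.compA !tens_comp !comp1m !compm1.
  by rewrite -Defs.compA (c_slide_x' x zigzag) Defs.compA tens_comp comp1m -powmSr.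
Qed.

End StandardPairs.

Variables (A : mor C (up ++ dn) (up ++ dn)) (B : mor C (dn ++ up) (dn ++ up)).
Hypothesis AB : shift_pair A B.

Lemma shift_B_t : B ∘ t = t ∘ A + c ∘ d.
Proof. by case: AB => tA _ _; rewrite -[B ∘ t](subKr (t ∘ A)) tA opprK. Qed.

Lemma shift_t_A : t ∘ A = B ∘ t - c ∘ d.
Proof. by rewrite shift_B_t addrK. Qed.

Variable tau : mor C (dn ++ up) (up ++ dn).

Lemma dpow_tau_shift r :
  (dpow r ∘ tau) ∘ B = dpow r.+1 ∘ tau + dpow r ∘ (tau ∘ B - A ∘ tau).
Proof.
case: AB => _ dA _.
by rewrite compBr (Defs.compA (dpow r) A) dA -Defs.compA addrC subrK.
Qed.

Lemma shift_tau_cpow r :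
  A ∘ (tau ∘ cpow r) = tau ∘ cpow r.+1 - (tau ∘ B - A ∘ tau) ∘ cpow r.
Proof.
case: AB => _ _ Bc.
by rewrite compBl -Defs.compA Bc opprB addrC subrK Defs.compA.
Qed.

Section Nonneg.
Variables (n : nat) (e : nat -> mor C unit_obj (up ++ dn)).
Hypotheses (tau_t_e : tau ∘ t + \sum_(r < n) e r ∘ dpow r = mid C (up ++ dn))
  (t_tau : t ∘ tau = mid C (dn ++ up)).

Lemma tau_shift_nonneg :
  tau ∘ B - A ∘ tau
  = tau ∘ (c ∘ (d ∘ tau)) - \sum_(r < n) e r ∘ (dpow r.+1 ∘ tau).
Proof.
case: AB => _ dA _.
have tau_t : tau ∘ t = mid C (up ++ dn) - \sum_(r < n) e r ∘ dpow r.
  by rewrite -tau_t_e addrK.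
have -> : tau ∘ B = tau ∘ ((B ∘ t) ∘ tau) by rewrite -Defs.compA t_tau compm1.
rewrite shift_B_t compDl compDr -(Defs.compA t A) (Defs.compA tau t) tau_t.
rewrite compBl comp1m comp_suml.
under eq_bigr => r _ do rewrite -Defs.compA (Defs.compA (dpow r) A) dA.
by rewrite -!Defs.compA addrC addrA addKr addrC.
Qed.

Lemma shift_e_nonneg r0 : t ∘ e r0 = 0 ->
  A ∘ e r0
  = - (tau ∘ (c ∘ (d ∘ e r0))) + \sum_(r < n) e r ∘ (dpow r.+1 ∘ e r0).
Proof.
case: AB => _ dA _ t_e.
rewrite -[A ∘ e r0]comp1m -tau_t_e compDl -Defs.compA (Defs.compA t A) shift_t_A.
rewrite compBl -Defs.compA t_e comp0r sub0r -Defs.compA compNr comp_suml.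
by under eq_bigr => r _ do rewrite -Defs.compA (Defs.compA (dpow r) A) dA.
Qed.

End Nonneg.

Section Neg.
Variables (n : nat) (f : nat -> mor C (dn ++ up) unit_obj).
Hypotheses (t_tau_f : t ∘ tau + \sum_(r < n) cpow r ∘ f r = mid C (dn ++ up))
  (tau_t : tau ∘ t = mid C (up ++ dn)).

Lemma tau_shift_neg :
  tau ∘ B - A ∘ tau
  = tau ∘ (c ∘ (d ∘ tau)) + \sum_(r < n) (tau ∘ cpow r.+1) ∘ f r.
Proof.
case: AB => _ _ Bc.
have t_tau : t ∘ tau = mid C (dn ++ up) - \sum_(r < n) cpow r ∘ f r.
  by rewrite -t_tau_f addrK.
rewrite -[A ∘ tau]comp1m -tau_t -Defs.compA (Defs.compA t A) shift_t_A compBl compBr.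
rewrite -(Defs.compA B t tau) t_tau compBr compm1 !compBr !comp_sumr.
under eq_bigr => r _ do rewrite (Defs.compA B) Bc Defs.compA.
by rewrite !Defs.compA -addrA -opprD subKr addrC.
Qed.

Lemma f_shift_neg r0 : f r0 ∘ t = 0 ->
  f r0 ∘ B = f r0 ∘ (c ∘ (d ∘ tau)) + \sum_(r < n) (f r0 ∘ cpow r.+1) ∘ f r.
Proof.
case: AB => _ _ Bc f_t.
rewrite -[f r0 ∘ B]compm1 -t_tau_f compDr -!(Defs.compA (f r0) B).
rewrite (Defs.compA B t) shift_B_t.
rewrite compDl compDr -(Defs.compA t A) (Defs.compA (f r0) t) f_t comp0l add0r.
rewrite -(Defs.compA c d) !comp_sumr.
by under eq_bigr => r _ do rewrite (Defs.compA B) Bc Defs.compA.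
Qed.

End Neg.

End ShiftPairs.

Section HeisRelations.
Variables (R : comPzRingType) (C : smcat R).
Variables (x : mor C up up) (s : mor C (up ++ up) (up ++ up))
  (c : mor C unit_obj (dn ++ up)) (d : mor C (up ++ dn) unit_obj)
  (tau : mor C (dn ++ up) (up ++ dn))
  (e : nat -> mor C unit_obj (up ++ dn))
  (f : nat -> mor C (dn ++ up) unit_obj) (k : int).
Hypothesis rels : heis_rels x s c d tau e f k.
Local Notation c' := (heis_c' x c tau e k).
Local Notation d' := (heis_d' x d tau f k).

Lemma tau_shift A B : shift_pair x s c d A B -> tau ∘ B - A ∘ tau = c' ∘ d'.
Proof.
move=> AB; case: k rels => [[|n]|m] [_ [inv1 inv2 ann1 ann2 _]];
  rewrite /heis_c' /heis_d' /=.
- rewrite (tau_shift_nonneg AB inv1 inv2) big_ord0 subr0 !tens_id !comp1m.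
  by rewrite Defs.compA.
- have d_tau : d ∘ tau = 0 by move: (ann2 0%N isT); rewrite powm0 tens_id compm1.
  rewrite (tau_shift_nonneg AB inv1 inv2) d_tau !comp0r sub0r.
  rewrite big_ord_recr big1 /= => [|i _]; last by rewrite ann2 ?comp0r // ltnS.
  by rewrite add0r compNl (Defs.compA d).
- have tau_c : tau ∘ c = 0 by move: (ann1 0%N isT); rewrite powm0 tens_id comp1m.
  rewrite (tau_shift_neg AB inv1 inv2) (Defs.compA tau c) tau_c !comp0l add0r.
  rewrite big_ord_recr big1 /= => [|i _]; last by rewrite ann1 ?comp0l // ltnS.
  by rewrite add0r Defs.compA.
Qed.

Lemma d'_shift_indep A1 B1 A2 B2 :
  shift_pair x s c d A1 B1 -> shift_pair x s c d A2 B2 -> d' ∘ B1 = d' ∘ B2.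
Proof.
move=> AB1 AB2; case: k rels => [n|m] [_ [inv1 inv2 _ ann2 _]].
- have -> : heis_d' x d tau f n = dpow x d n ∘ tau by rewrite /heis_d' /= Defs.compA.
  rewrite (dpow_tau_shift AB1) (dpow_tau_shift AB2).
  by rewrite (tau_shift_nonneg AB1 inv1 inv2) (tau_shift_nonneg AB2 inv1 inv2).
- rewrite /heis_d' /= (f_shift_neg AB1 inv1 (ann2 m (ltnSn m))).
  by rewrite (f_shift_neg AB2 inv1 (ann2 m (ltnSn m))).
Qed.

Lemma shift_c'_indep A1 B1 A2 B2 :
  shift_pair x s c d A1 B1 -> shift_pair x s c d A2 B2 -> A1 ∘ c' = A2 ∘ c'.
Proof.
move=> AB1 AB2; case: k rels => [[|n]|m] [_ [inv1 inv2 ann1 _ _]]; rewrite /heis_c' /=.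
- rewrite (shift_tau_cpow AB1 tau 0) (shift_tau_cpow AB2 tau 0).
  by rewrite (tau_shift_nonneg AB1 inv1 inv2) (tau_shift_nonneg AB2 inv1 inv2).
- rewrite !compNr (shift_e_nonneg AB1 inv1 (ann1 n (ltnSn n))).
  by rewrite (shift_e_nonneg AB2 inv1 (ann1 n (ltnSn n))).
- rewrite (shift_tau_cpow AB1 tau m.+1) (shift_tau_cpow AB2 tau m.+1).
  by rewrite (tau_shift_neg AB1 inv1 inv2) (tau_shift_neg AB2 inv1 inv2).
Qed.

End HeisRelations.

Theorem lemma2p2 (R : comPzRingType) (k : int) (C : smcat R)
  (x : mor C up up) (s : mor C (up ++ up) (up ++ up))
  (c : mor C unit_obj (dn ++ up)) (d : mor C (up ++ dn) unit_obj)
  (tau : mor C (dn ++ up) (up ++ dn))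
  (e : nat -> mor C unit_obj (up ++ dn))
  (f : nat -> mor C (dn ++ up) unit_obj) :
  heis_rels x s c d tau e f k ->
  let x' := heis_x' x c d in
  let c' := heis_c' x c tau e k in
  let d' := heis_d' x d tau f k in
  [/\ mcomp C tau (mtens C x' (mid C up)) - mcomp C (mtens C (mid C up) x') tau
        = mcomp C c' d',
      mcomp C tau (mtens C (mid C dn) x) - mcomp C (mtens C x (mid C dn)) tau
        = mcomp C c' d',
      mcomp C d' (mtens C (mid C dn) x) = mcomp C d' (mtens C x' (mid C up)) &
      mcomp C (mtens C x (mid C dn)) c' = mcomp C (mtens C (mid C up) x') c'].
Proof.
move=> rels x' c' d'; have [[s_invol _ xs_sx zigzag _] _] := rels.
have pair_x : shift_pair x s c d (x ⊗ mid C dn) (mid C dn ⊗ x).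
  exact: shift_pair_x.
have pair_x' : shift_pair x s c d (mid C up ⊗ x') (x' ⊗ mid C up).
  exact: shift_pair_x'.
split.
- exact: (tau_shift rels pair_x').
- exact: (tau_shift rels pair_x).
- exact: (d'_shift_indep rels pair_x pair_x').
- exact: (shift_c'_indep rels pair_x pair_x').
Qed.
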